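(* Let $\mathcal C\subseteq\{0,1\}^n$ and $\mathcal D\subseteq\{0,1\}^m$ be neural codes, $q:\mathcal C\to\mathcal D$ a code map, and $\phi_q:R_\mathcal D\to R_\mathcal C$, $\phi_q(f)=f\circ q$, its pullback. Let $\tau:R[m]\to R[n]$ be the ring homomorphism with $\tau(x_i)=x_i$ if $i\le n$ and $\tau(x_i)=0$ if $i>n$, and view $R_\mathcal C$ as an $R[m]$-module via $r\cdot g=\tau(r)\cdot g$. Then $\phi_q$ is an $R[m]$-module homomorphism if and only if: 1. when $n>m$: $q(c)=(c_1,\dots,c_m)$ for all $c\in\mathcal C$ (deletion of the last $n-m$ neurons, possibly composed with an inclusion into $\mathcal D$); 2. when $n=m$: $q(c)=c$ for all $c\in\mathcal C$ (an inclusion map); 3. when $n<m$: $q(c)=(c_1,\dots,c_n,0,\dots,0)$ for all $c\in\mathcal C$ (adding $m-n$ neurons that are always $0$ to the end of each word, possibly composed with an inclusion into $\mathcal D$).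
   Context: For a code $\mathcal C\subseteq\{0,1\}^n$, $R_\mathcal C$ is the ring of all functions $\mathcal C\to\mathbb F_2$ (equivalently $\mathbb F_2[x_1,\dots,x_n]$ modulo the ideal of polynomials vanishing on $\mathcal C$). $R[n]=\mathbb F_2[x_1,\dots,x_n]/\langle x_i^2-x_i\rangle$, and $R_\mathcal C$ is an $R[n]$-module via $(r\cdot f)(c)=r(c)f(c)$. *)

From HB Require Import structures.
From mathcomp Require Import all_boot all_order all_algebra all_field.
From mathcomp Require Import mpoly.
Set Implicit Arguments. Unset Strict Implicit. Unset Printing Implicit Defensive.
Import GRing.Theory.
Local Open Scope ring_scope.

Notation F2 := ('F_2 : finFieldType).

Definition word (n : nat) := n.-tuple bool.
Definition code (n : nat) := {set word n}.

Definition cw (n : nat) (C : code n) := {c : word n | c \in C}.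

Definition RC (n : nat) (C : code n) := cw C -> F2.

Definition evalw (n : nat) (r : {mpoly F2[n]}) (c : word n) : F2 :=
  r.@[fun i => (tnth c i)%:R].

(* R[m]-module structure on R_D : (r . f)(d) = r(d) f(d).
   (Polynomials are representatives of classes in R[m]; the action
   only depends on the class since x_i^2 - x_i vanishes on {0,1}^m.) *)
Definition act (m : nat) (D : code m) (r : {mpoly F2[m]}) (f : RC D) : RC D :=
  fun d => evalw r (val d) * f d.

Definition tau (m n : nat) (r : {mpoly F2[m]}) : {mpoly F2[n]} :=
  r \mPo [tuple (match (insub (val i) : option 'I_n) with
                 | Some j => 'X_j | None => 0 end) | i < m].

Definition act_tau (m n : nat) (C : code n) (r : {mpoly F2[m]}) (g : RC C) : RC C :=
  act (tau n r) g.

Definition pullback (n m : nat) (C : code n) (D : code m) (q : cw C -> cw D)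
  (f : RC D) : RC C := fun c => f (q c).

Definition is_Rm_hom (n m : nat) (C : code n) (D : code m)
  (phi : RC D -> RC C) : Prop :=
  (forall f g : RC D, phi (fun d => f d + g d) = (fun c => phi f c + phi g c)) /\
  (forall (r : {mpoly F2[m]}) (f : RC D), phi (act r f) = act_tau r (phi f)).

From HB Require Import structures.
From mathcomp Require Import all_boot all_order all_algebra all_field.
From mathcomp Require Import mpoly.
From Stdlib Require Import FunctionalExtensionality.
Import GRing.Theory.
Local Open Scope ring_scope.

(* Since R_C consists of all functions on C, the module condition at c for
   r = x_i and f = 1 says that the i-th bit of q(c) is tau(x_i)(c), i.e. the
   i-th bit of c for i < n and 0 otherwise; conversely these bit equalities
   make tau(r)(c) = r(q(c)) for every polynomial r.  The three cases of the
   theorem are the three shapes of "c truncated or zero-padded to length m". *)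

Lemma mkseq_nth_take_nseq (T : Type) (x0 : T) (s : seq T) (m : nat) :
  mkseq (nth x0 s) m = take m s ++ nseq (m - size s) x0.
Proof.
apply: (@eq_from_nth _ x0).
  rewrite size_mkseq size_cat size_take size_nseq.
  by case: ltnP => [/ltnW /eqP -> | /subnKC ->]; rewrite ?addn0.
move=> i; rewrite size_mkseq => lt_im.
rewrite nth_mkseq // nth_cat size_take nth_nseq if_same.
case: (ltnP m (size s)) => [_ | le_ms]; first by rewrite lt_im nth_take.
by case: ltnP => [_ | le_si]; [rewrite nth_take | rewrite nth_default].
Qed.

Lemma evalw_tau (n m : nat) (r : {mpoly F2[m]}) (c : word n) :
  evalw (tau n r) c = r.@[fun i : 'I_m => (nth false c i)%:R].
Proof.
rewrite /evalw /tau comp_mpoly_meval; apply: meval_eq => i.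
rewrite tnth_mktuple; case: insubP => [j _ val_j | not_lt_in].
  by rewrite mevalXU (tnth_nth false) val_j.
by rewrite meval0 nth_default // size_tuple leqNgt.
Qed.

Lemma pullback_is_Rm_homP (n m : nat) (C : code n) (D : code m)
    (q : cw C -> cw D) :
  is_Rm_hom (pullback q) <->
  forall c : cw C, val (val (q c)) = mkseq (nth false (val (val c))) m.
Proof.
split=> [[_ hom_act] c | q_bits].
  apply: (@eq_from_nth _ false); first by rewrite size_mkseq size_tuple.
  move=> i; rewrite size_tuple => lt_im.
  have := congr1 (fun F => F c) (hom_act 'X_(Ordinal lt_im) (fun _ => 1)).
  rewrite /pullback /act_tau /act !mulr1 evalw_tau /evalw !mevalXU /=.
  rewrite (tnth_nth false) nth_mkseq //.
  by case: (nth false _ i); case: (nth false _ i).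
split=> [f g | r f] //.
apply: functional_extensionality => c.
rewrite /pullback /act_tau /act evalw_tau /evalw; congr (_ * _).
by apply: meval_eq => i; rewrite (tnth_nth false) q_bits nth_mkseq.
Qed.

Theorem proposition1 (n m : nat) (C : code n) (D : code m) (q : cw C -> cw D) :
  [/\ (m < n)%N -> (is_Rm_hom (pullback q) <->
                     forall c : cw C, val (val (q c)) = take m (val (val c))),
      n = m -> (is_Rm_hom (pullback q) <->
                     forall c : cw C, val (val (q c)) = val (val c))
    & (n < m)%N -> (is_Rm_hom (pullback q) <->
                     forall c : cw C,
                       val (val (q c)) = val (val c) ++ nseq (m - n) false)].
Proof.
have resize_eq : forall P : cw C -> seq bool,
    (forall c, take m (val (val c)) ++ nseq (m - n) false = P c) ->
    is_Rm_hom (pullback q) <-> forall c, val (val (q c)) = P c.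
  move=> P P_eq; rewrite pullback_is_Rm_homP.
  by split=> q_bits c; rewrite q_bits mkseq_nth_take_nseq size_tuple P_eq.
split=> cmp_mn; apply: resize_eq => c.
- by move/ltnW: cmp_mn; rewrite -subn_eq0 => /eqP ->; rewrite cats0.
- by rewrite -cmp_mn subnn cats0 take_oversize // size_tuple.
- by rewrite take_oversize // size_tuple ltnW.
Qed.
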